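(* Let $Y$ be a random variable whose moment generating function $E[e^{tY}]$ exists for $|t|<r_0$ for some $r_0>0$. Let $(Y_j)_{j\ge1}$ be mutually independent copies of $Y$, $S_0=0$, $S_k=Y_1+\cdots+Y_k$ for $k\ge1$. Let $r$ be a positive integer and define the probabilistic bivariate $r$-Bell polynomials $\phi_{n,r}^Y(x,y)$ by $$\Big(1+y\big(E[e^{Yt}]-1\big)\Big)^{x}e^{rt}=\sum_{n=0}^{\infty}\phi_{n,r}^Y(x,y)\frac{t^n}{n!}.$$ Then for every $n\ge0$, $$\phi_{n,r}^Y(x,y)=\sum_{k=0}^{n}{n+r\brace k+r}_{r,Y}(x)_k\,y^k,$$ where ${n+r\brace k+r}_{r,Y}=\frac{1}{k!}\sum_{j=0}^{k}\binom{k}{j}(-1)^{k-j}E\big[(S_j+r)^n\big]$ for $n\ge k\ge0$.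
   Context: $(x)_0=1$, $(x)_k=x(x-1)\cdots(x-k+1)$ for $k\ge1$. The power $(1+u)^x$ is understood via the binomial series $\sum_{k\ge0}\binom{x}{k}u^k$ and the identity is one of power series in $t$; $x,y$ are variables. The numbers ${n+r\brace k+r}_{r,Y}$ are the probabilistic $r$-Stirling numbers of the second kind associated with $Y$. *)

From HB Require Import structures.
From mathcomp Require Import all_boot all_order all_algebra.
From mathcomp Require Import all_classical all_reals all_analysis.
Set Implicit Arguments. Unset Strict Implicit. Unset Printing Implicit Defensive.
Import Order.TTheory GRing.Theory Num.Theory.
Local Open Scope classical_set_scope.
Local Open Scope ring_scope.

Definition fps (R : realType) := nat -> R.

Definition fps_one (R : realType) : fps R := fun n => (n == 0%N)%:R.

Definition fps_mul (R : realType) (a b : fps R) : fps R :=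
  fun n => \sum_(i < n.+1) a i * b (n - i)%N.

Definition fps_exp (R : realType) (a : fps R) (k : nat) : fps R :=
  iter k (fps_mul a) (fps_one R).

Definition falling (R : realType) (x : R) (k : nat) : R :=
  \prod_(i < k) (x - i%:R).

Definition binomR (R : realType) (x : R) (k : nat) : R := falling x k / (k`!)%:R.

(* (1+u)^x := sum_{k>=0} binom(x,k) u^k, for a series u with u 0 = 0.
   Since u^k has order >= k, the coefficient of t^n only receives
   contributions from k <= n, so the n-th coefficient is the finite sum below. *)
Definition binom_series (R : realType) (x : R) (u : fps R) : fps R :=
  fun n => \sum_(k < n.+1) binomR x k * fps_exp u k n.

Definition exp_series (R : realType) (c : R) : fps R := fun n => c ^+ n / (n`!)%:R.

(* E[e^{tY}] as a formal power series in t: sum_m E[Y^m] t^m / m! *)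
Definition mgf_series d (T : measurableType d) (R : realType)
  (P : probability T R) (Y : T -> R) : fps R :=
  fun m => fine ('E_P[fun w => (Y w ^+ m)%R])%E / (m`!)%:R.

Definition prob_rBell d (T : measurableType d) (R : realType)
  (P : probability T R) (Y : T -> R) (r : nat) (x y : R) (n : nat) : R :=
  (n`!)%:R *
  fps_mul (binom_series x (fun m => y * (mgf_series P Y m - fps_one R m)))
          (exp_series r%:R) n.

Definition mutually_independent d (T : measurableType d) (R : realType)
  (P : probability T R) (X : nat -> {RV P >-> R}) : Prop :=
  forall (s : seq nat) (B : nat -> set R),
    uniq s -> (forall j, j \in s -> measurable (B j)) ->
    P (\big[setI/setT]_(j <- s) (X j @^-1` B j)) =
    (\prod_(j <- s) P (X j @^-1` B j))%E.

(* probabilistic r-Stirling number of the second kind {n+r brace k+r}_{r,Y},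
   given the copies Ys (S_j = Ys 0 + ... + Ys (j-1)) *)
Definition prob_rStirling2 d (T : measurableType d) (R : realType)
  (P : probability T R) (Ys : nat -> {RV P >-> R}) (r n k : nat) : R :=
  (k`!)%:R^-1 * \sum_(j < k.+1)
     ('C(k, j))%:R * (-1) ^+ (k - j) *
     fine ('E_P[fun w => ((\sum_(i < j) Ys i w + r%:R) ^+ n)%R])%E.

(* Write M(t) = E[e^{tY}] = sum_m E[Y^m] t^m / m!.  Expanding
   (1 + y (M - 1))^x = sum_k (x)_k / k! y^k (M - 1)^k and
   (M - 1)^k = sum_j C(k, j) (-1)^(k - j) M^j reduces the identity to the fact
   that M^j e^{rt} is the exponential generating function of E[(S_j + r)^n].
   This follows by induction on j from the binomial expansion
   (S_{j+1} + r)^n = sum_k C(n, k) (S_j + r)^(n - k) Y_{j+1}^k and the product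
   rule E[prod_i f_i(Y_i)] = prod_i E[f_i(Y_i)] for independent Y_i.  Only the
   coefficients of t^0, ..., t^n matter, so the series are handled as
   polynomials truncated at degree n.  The moments are finite because the moment
   generating function is finite near 0; the product rule is derived from the
   product rule for events by approximation with simple functions and monotone
   convergence, then by splitting into positive and negative parts. *)

From HB Require Import structures.
From mathcomp Require Import all_boot all_order all_algebra.
From mathcomp Require Import all_classical all_reals all_analysis.
From mathcomp Require Import measurable_realfun finmap zify ring.
Import Order.TTheory GRing.Theory Num.Theory.
Import HBNNSimple.
Set Implicit Arguments. Unset Strict Implicit. Unset Printing Implicit Defensive.
Local Open Scope classical_set_scope.
Local Open Scope ring_scope.

Lemma coef_exprn_lt (R : nzRingType) (p : {poly R}) k i :
  p`_0 = 0 -> (i < k)%N -> (p ^+ k)`_i = 0.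
Proof.
move=> p0; elim: k i => [|k IHk] i ik //.
rewrite exprS coefM big1 // => j _.
have [->|j_gt0] := posnP j; first by rewrite p0 mul0r.
by rewrite IHk ?mulr0 //; have := ltn_ord j; lia.
Qed.

Section ExponentialGeneratingPolynomial.
Variable R : numFieldType.

Lemma natr_fact_neq0 k : (k`!)%:R != 0 :> R.
Proof. by rewrite pnatr_eq0 -lt0n fact_gt0. Qed.

Definition egf_poly (N : nat) (a : nat -> R) : {poly R} :=
  \poly_(i < N) (a i / (i`!)%:R).

Variables (mu : nat -> R) (c : R).

(* [shifted_sum_moment j n] is E[(c + Y_1 + ... + Y_j)^n] for independent Y_i
   with moments [mu]. *)
Fixpoint shifted_sum_moment (j n : nat) : R :=
  if j is j'.+1 then
    \sum_(k < n.+1) 'C(n, k)%:R * shifted_sum_moment j' (n - k) * mu k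
  else c ^+ n.

Lemma shifted_sum_moment_egf N j n : (n < N)%N ->
  shifted_sum_moment j n =
  (n`!)%:R * ((egf_poly N mu) ^+ j * egf_poly N (fun i => c ^+ i))`_n.
Proof.
elim: j n => [|j IHj] n nN.
  by rewrite expr0 mul1r coef_poly nN mulrC divfK // natr_fact_neq0.
rewrite /= exprS -mulrA coefM mulr_sumr; apply: eq_bigr => k _.
have kn : (k <= n)%N by have := ltn_ord k; lia.
rewrite IHj ?coef_poly; last by lia.
rewrite (_ : (k < N)%N); last by lia.
have /(congr1 (fun m => m%:R : R)) := bin_fact kn; rewrite !natrM => <-.
by field; rewrite !natr_fact_neq0.
Qed.

End ExponentialGeneratingPolynomial.

Section TruncatedPowerSeries.
Variable R : realType.

Definition fps_agree (N : nat) (a : fps R) (p : {poly R}) :=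
  forall i, (i < N)%N -> a i = p`_i.

Lemma fps_agree_one N : fps_agree N (fps_one R) 1.
Proof. by move=> i _; rewrite coef1. Qed.

Lemma fps_agree_mul N a b p q : fps_agree N a p -> fps_agree N b q ->
  fps_agree N (fps_mul a b) (p * q).
Proof.
move=> ap bq i iN; rewrite /fps_mul coefM; apply: eq_bigr => k _.
by rewrite ap ?bq //; have := ltn_ord k; lia.
Qed.

Lemma fps_agree_exp N a p k : fps_agree N a p -> fps_agree N (fps_exp a k) (p ^+ k).
Proof.
move=> ap; elim: k => [|k IHk]; first exact: fps_agree_one.
by rewrite /fps_exp iterS exprS; apply: fps_agree_mul.
Qed.

Lemma fps_agree_binom_series N x u U : fps_agree N u U -> U`_0 = 0 ->
  fps_agree N (binom_series x u) (\sum_(k < N) binomR x k *: U ^+ k).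
Proof.
move=> uU U0 i iN; rewrite /binom_series coef_sum.
rewrite (big_ord_widen N (fun k => binomR x k * fps_exp u k i)) // big_mkcond.
apply: eq_bigr => k _; rewrite coefZ.
case: ifP => ki; first by rewrite (fps_agree_exp k uU).
by rewrite coef_exprn_lt ?mulr0 //; lia.
Qed.

Lemma coef_binom_series_mul_exp_series (mu : nat -> R) (c x y : R) n :
  mu 0%N = 1 ->
  (n`!)%:R * fps_mul (binom_series x
       (fun m => y * (mu m / (m`!)%:R - fps_one R m))) (exp_series c) n =
  \sum_(k < n.+1) ((k`!)%:R^-1 * \sum_(j < k.+1)
     'C(k, j)%:R * (-1) ^+ (k - j) * shifted_sum_moment mu c j n) *
     falling x k * y ^+ k.
Proof.
move=> mu0; set N := n.+1.
set M := egf_poly N mu; set U := y *: (M - 1).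
have uU : fps_agree N (fun m => y * (mu m / (m`!)%:R - fps_one R m)) U.
  by move=> i iN; rewrite coefZ coefB coef_poly iN coef1.
have U0 : U`_0 = 0 by rewrite coefZ coefB coef_poly coef1 /= mu0 divr1 subrr mulr0.
have eE : fps_agree N (exp_series c) (egf_poly N (fun i => c ^+ i)).
  by move=> i iN; rewrite coef_poly iN.
rewrite (fps_agree_mul (fps_agree_binom_series x uU U0) eE) //.
rewrite mulr_suml coef_sum mulr_sumr; apply: eq_bigr => k _.
rewrite -scalerAl coefZ exprZn -scalerAl coefZ addrC exprDn.
rewrite mulr_suml coef_sum !mulr_sumr !mulr_suml; apply: eq_bigr => j _.
rewrite (shifted_sum_moment_egf _ _ _ (ltnSn n)) -mulrnAl.
have -> : (-1) ^+ (k - j) *+ 'C(k, j) = ((-1) ^+ (k - j) *+ 'C(k, j))%:P :> {poly R}.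
  by rewrite rmorphMn rmorphXn rmorphN1.
rewrite -[_%:P * _ * _]mulrA mul_polyC coefZ /binomR; ring.
Qed.

End TruncatedPowerSeries.

Section IntegralAgainstComposition.
Local Open Scope ereal_scope.
Context d (T : measurableType d) (R : realType) (mu : {measure set T -> \bar R}).
Variable Z : T -> R.
Hypothesis mZ : measurable_fun setT Z.

Lemma cvg_integral_nnsfun_approx_comp (Phi : T -> R) (h : R -> R)
    (mh : measurable_fun [set: R] (EFin \o h)) :
  measurable_fun setT Phi -> (forall w, 0 <= Phi w)%R -> (forall y, 0 <= h y)%R ->
  \int[mu]_w (nnsfun_approx measurableT mh k (Z w) * Phi w)%:E @[k --> \oo] -->
  \int[mu]_w (h (Z w) * Phi w)%:E.
Proof.
move=> mPhi Phi_ge0 h_ge0; set g := nnsfun_approx measurableT mh.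
have -> : (fun w => (h (Z w) * Phi w)%:E) = fun w => limn (fun k => (g k (Z w) * Phi w)%:E).
  apply/funext => w; apply/esym/(cvg_lim (@ereal_hausdorff R)).
  under eq_fun do rewrite EFinM.
  rewrite EFinM; apply: cvgeZr => //.
  by apply: (cvg_nnsfun_approx measurableT mh) => // y _; rewrite lee_fin.
apply: cvg_monotone_convergence => //.
- move=> k; apply/measurable_EFinP/measurable_funM => //.
  exact: measurableT_comp.
- by move=> k w _; rewrite lee_fin mulr_ge0.
- move=> w _ m n mn; rewrite lee_fin ler_wpM2r //.
  by have /lefP := nd_nnsfun_approx measurableT mh mn; apply.
Qed.

Lemma eq_integral_nnsfun_comp (Phi Psi : T -> R) (g : {nnsfun R >-> R}) :
  measurable_fun setT Phi -> measurable_fun setT Psi ->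
  (forall w, 0 <= Phi w)%R -> (forall w, 0 <= Psi w)%R ->
  (forall A, measurable A -> \int[mu]_w (\1_A (Z w) * Phi w)%:E =
                             \int[mu]_w (\1_A (Z w) * Psi w)%:E) ->
  \int[mu]_w (g (Z w) * Phi w)%:E = \int[mu]_w (g (Z w) * Psi w)%:E.
Proof.
move=> mPhi mPsi Phi_ge0 Psi_ge0 indicZ.
have mg c : measurable (g @^-1` [set c]).
  by rewrite -[_ @^-1` _]setTI; exact: measurable_funP.
have indic_neg c y : (c < 0)%R -> \1_(g @^-1` [set c]) y = 0%R :> R.
  move=> c_lt0; rewrite indicE memNset //= => gyc.
  by move: c_lt0; rewrite -gyc ltNge fun_ge0.
have term_ge0 c y : (0 <= c * \1_(g @^-1` [set c]) y)%R.
  have [c_ge0|/indic_neg->] := leP 0%R c; last by rewrite mulr0.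
  by rewrite mulr_ge0.
have mind (Chi : T -> R) c : measurable_fun setT Chi ->
    measurable_fun setT (fun w => \1_(g @^-1` [set c]) (Z w) * Chi w)%R.
  by move=> mChi; apply: measurable_funM => //; exact: measurableT_comp.
suff expand (Chi : T -> R) : measurable_fun setT Chi -> (forall w, 0 <= Chi w)%R ->
    \int[mu]_w (g (Z w) * Chi w)%:E = \sum_(c <- fset_set (range g))
      \int[mu]_w (c * \1_(g @^-1` [set c]) (Z w) * Chi w)%:E.
  rewrite expand // [RHS]expand //; apply: eq_bigr => c _.
  have [c_ge0|c_lt0] := leP 0%R c.
    under eq_integral do rewrite -mulrA EFinM.
    under [RHS]eq_integral do rewrite -mulrA EFinM.
    rewrite !ge0_integralZl_EFin ?indicZ // => [w _||w _|];
      by rewrite ?lee_fin ?mulr_ge0 //; apply/measurable_EFinP/mind.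
  by apply: eq_integral => w _; rewrite indic_neg // !mulr0 !mul0r.
move=> mChi Chi_ge0.
under eq_integral do rewrite (fimfunE g) (fsbig_finite _ _ (fimfunP g)) big_distrl -sumEFin.
apply: ge0_integral_sum => // [c|c w _].
  apply/measurable_EFinP/measurable_funM => //; apply: measurable_funM => //.
  exact: measurableT_comp.
by rewrite lee_fin mulr_ge0.
Qed.

Lemma eq_integral_comp_mul (Phi Psi : T -> R) (h : R -> R) :
  measurable_fun setT Phi -> measurable_fun setT Psi ->
  (forall w, 0 <= Phi w)%R -> (forall w, 0 <= Psi w)%R ->
  (forall A, measurable A -> \int[mu]_w (\1_A (Z w) * Phi w)%:E =
                             \int[mu]_w (\1_A (Z w) * Psi w)%:E) ->
  measurable_fun setT h -> (forall y, 0 <= h y)%R ->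
  \int[mu]_w (h (Z w) * Phi w)%:E = \int[mu]_w (h (Z w) * Psi w)%:E.
Proof.
move=> mPhi mPsi Phi_ge0 Psi_ge0 indicZ mh h_ge0.
have mEh : measurable_fun [set: R] (EFin \o h) by exact/measurable_EFinP.
rewrite -(cvg_lim (@ereal_hausdorff R) (cvg_integral_nnsfun_approx_comp mEh mPhi Phi_ge0 h_ge0)).
rewrite -(cvg_lim (@ereal_hausdorff R) (cvg_integral_nnsfun_approx_comp mEh mPsi Psi_ge0 h_ge0)).
by congr (limn _); apply/funext => k; exact: eq_integral_nnsfun_comp.
Qed.

Lemma integral_indic_comp_mulr (A : set R) (K : R) : measurable A -> (0 <= K)%R ->
  \int[mu]_w (\1_A (Z w) * K)%:E = mu (Z @^-1` A) * K%:E.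
Proof.
move=> mA K_ge0; have mZA : measurable (Z @^-1` A) by rewrite -[_ @^-1` _]setTI; exact: mZ.
have := integral_indic mu measurableT mZA; rewrite setIT => <-.
under eq_integral do rewrite EFinM.
by rewrite ge0_integralZr //; exact/measurable_EFinP/measurableT_comp.
Qed.

End IntegralAgainstComposition.

Section Expectation.
Local Open Scope ereal_scope.
Context d (T : measurableType d) (R : realType) (P : probability T R).

Lemma Lfun1_ge0 (f : T -> R) :
  measurable_fun setT f -> (forall w, 0 <= f w)%R -> 'E_P[f] \is a fin_num -> f \in Lfun P 1.
Proof.
move=> mf f_ge0; rewrite expectation.unlock => f_fin.
apply/Lfun1_integrable/integrableP; split; first exact/measurable_EFinP.
under eq_integral do rewrite /= ger0_norm //.
by rewrite -ge0_fin_numE // integral_ge0 // => w _; rewrite lee_fin.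
Qed.

Lemma expectation_sumr (I : Type) (r : seq I) (F : I -> T -> R) :
  (forall i, F i \in Lfun P 1) -> 'E_P[\sum_(i <- r) F i] = \sum_(i <- r) 'E_P[F i].
Proof.
move=> F_L1; elim: r => [|i r IHr]; first by rewrite !big_nil expectation_cst.
by rewrite !big_cons expectationD ?IHr // rpred_sum.
Qed.

End Expectation.

Section ProductRule.
Local Open Scope ereal_scope.
Context d (T : measurableType d) (R : realType) (P : probability T R)
  (X : nat -> {RV P >-> R}).
Hypothesis indep : mutually_independent X.

Lemma integral_prod_indic (t : seq nat) (B : nat -> set R) :
  uniq t -> (forall i, measurable (B i)) ->
  \int[P]_w (\prod_(i <- t) \1_(B i) (X i w))%:E = \prod_(i <- t) P (X i @^-1` B i).
Proof.
move=> ut mB.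
have -> : (fun w => (\prod_(i <- t) \1_(B i) (X i w))%:E) =
          (fun w => (\1_(\big[setI/setT]_(i <- t) X i @^-1` B i) w : R)%:E).
  rewrite funeqE => w; congr (_%:E); elim: t {ut} => [|a t IHt].
    by rewrite !big_nil indicE in_setT.
  by rewrite !big_cons IHt indicI.
rewrite integral_indic ?setIT //; first exact: indep.
by apply: bigsetI_measurable => i _; exact: measurable_funPTI.
Qed.

(* Induction on [s]: as functions of the factor of [X a], both sides of the
   product rule agree on indicators, by the induction hypothesis with [a] moved
   to [t], hence on all nonnegative measurable functions. *)
Lemma expectation_prod_indep_ge0_indic (s t : seq nat) (h : nat -> R -> R) (B : nat -> set R) :
  uniq (s ++ t) -> (forall i, measurable_fun setT (h i)) -> (forall i y, 0 <= h i y)%R ->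
  (forall i, measurable (B i)) -> (forall i, 'E_P[h i \o X i] \is a fin_num) ->
  'E_P[fun w => (\prod_(i <- s) h i (X i w) * \prod_(i <- t) \1_(B i) (X i w))%R] =
  (\prod_(i <- s) fine 'E_P[h i \o X i] * \prod_(i <- t) fine (P (X i @^-1` B i)))%R%:E.
Proof.
rewrite expectation.unlock => + mh h_ge0 + h_fin.
have mhX i : measurable_fun setT (h i \o X i) by exact: measurableT_comp.
have mXB i A : measurable A -> measurable (X i @^-1` A) by exact: measurable_funPTI.
elim: s t B => [|a s IHs] t B ut mB.
  under eq_integral do rewrite big_nil mul1r.
  rewrite integral_prod_indic // big_nil mul1r -prodEFin; apply: eq_bigr => i _.
  by rewrite fineK //; apply: fin_num_measure; exact: mXB.
move: ut; rewrite cat_cons /= => /andP[a_st ust].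
have a_t : a \notin t by move: a_st; rewrite mem_cat negb_or => /andP[].
pose Phi w := (\prod_(i <- s) h i (X i w) * \prod_(i <- t) \1_(B i) (X i w))%R.
pose K := (\prod_(i <- s) fine (\int[P]_w (h i (X i w))%:E) *
           \prod_(i <- t) fine (P (X i @^-1` B i)))%R.
have mPhi : measurable_fun setT Phi.
  by apply: measurable_funM; apply: measurable_prod => i _; apply: measurableT_comp.
have Phi_ge0 w : (0 <= Phi w)%R by rewrite mulr_ge0 // prodr_ge0.
have K_ge0 : (0 <= K)%R.
  rewrite mulr_ge0 // prodr_ge0 // => i _; apply: fine_ge0 => //.
  by apply: integral_ge0 => w _; rewrite lee_fin.
have indic_Phi A : measurable A ->
    \int[P]_w (\1_A (X a w) * Phi w)%:E = \int[P]_w (\1_A (X a w) * cst K w)%:E.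
  move=> mA; pose B' i := if i == a then A else B i.
  have B'_t : {in t, B' =1 B}.
    by move=> i it; rewrite /B' ifN //; apply: contraNneq a_t => <-.
  have u' : uniq (s ++ a :: t) by rewrite -cat1s uniq_catCA cat1s /= a_st.
  have mB' i : measurable (B' i) by rewrite /B'; case: ifP.
  have B'_indic w : (\prod_(i <- t) \1_(B' i) (X i w) = \prod_(i <- t) \1_(B i) (X i w) :> R)%R.
    by apply: eq_big_seq => i /B'_t ->.
  have B'_P : (\prod_(i <- t) fine (P (X i @^-1` B' i)) = \prod_(i <- t) fine (P (X i @^-1` B i)))%R.
    by apply: eq_big_seq => i /B'_t ->.
  move: (IHs _ _ u' mB').
  under eq_integral do rewrite big_cons B'_indic /B' eqxx mulrCA.
  rewrite big_cons B'_P /B' eqxx => ->.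
  rewrite (integral_indic_comp_mulr _ (measurable_funPT (X a))) //.
  transitivity ((fine (P (X a @^-1` A)))%:E * K%:E).
    by rewrite -EFinM /K; congr (_%:E); ring.
  by rewrite fineK //; apply: fin_num_measure; exact: mXB.
under eq_integral do rewrite big_cons -mulrA.
rewrite (eq_integral_comp_mul (measurable_funPT (X a)) mPhi (measurable_cst K) Phi_ge0
  (fun=> K_ge0) indic_Phi (mh a) (h_ge0 a)).
under eq_integral do rewrite /= EFinM.
rewrite ge0_integralZr // => [||w _]; last by rewrite lee_fin.
  by rewrite -(fineK (h_fin a)) -EFinM big_cons /K; congr (_%:E); ring.
exact/measurable_EFinP/mhX.
Qed.
Lemma expectation_prod_indep_ge0 (t : seq nat) (h : nat -> R -> R) : uniq t ->
  (forall i, measurable_fun setT (h i)) -> (forall i y, 0 <= h i y)%R ->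
  (forall i, 'E_P[h i \o X i] \is a fin_num) ->
  (fun w => \prod_(i <- t) h i (X i w))%R \in Lfun P 1 /\
  'E_P[fun w => \prod_(i <- t) h i (X i w)]%R = (\prod_(i <- t) fine 'E_P[h i \o X i])%R%:E.
Proof.
move=> ut mh h_ge0 h_fin.
have E_prod : 'E_P[fun w => \prod_(i <- t) h i (X i w)]%R =
              (\prod_(i <- t) fine 'E_P[h i \o X i])%R%:E.
  have := @expectation_prod_indep_ge0_indic t [::] h (fun=> setT).
  rewrite cats0 => /(_ ut mh h_ge0 (fun=> measurableT) h_fin).
  rewrite big_nil mulr1 => <-; congr 'E_P[_]; apply/funext => w.
  by rewrite big_nil mulr1.
split => //; apply: Lfun1_ge0; last by rewrite E_prod.
  by apply: measurable_prod => i _; exact: measurableT_comp.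
by move=> w; rewrite prodr_ge0.
Qed.

(* Splitting [f a] into its positive and negative parts moves [a] to [t]. *)
Lemma expectation_prod_indep_mixed (s t : seq nat) (f h : nat -> R -> R) :
  uniq (s ++ t) ->
  (forall i, measurable_fun setT (f i)) -> (forall i, f i \o X i \in Lfun P 1) ->
  (forall i, measurable_fun setT (h i)) -> (forall i y, 0 <= h i y)%R ->
  (forall i, 'E_P[h i \o X i] \is a fin_num) ->
  (fun w => \prod_(i <- s) f i (X i w) * \prod_(i <- t) h i (X i w))%R \in Lfun P 1 /\
  'E_P[fun w => (\prod_(i <- s) f i (X i w) * \prod_(i <- t) h i (X i w))%R] =
  (\prod_(i <- s) fine 'E_P[f i \o X i] * \prod_(i <- t) fine 'E_P[h i \o X i])%R%:E.
Proof.
move=> + mf f_L1; elim: s t h => [|a s IHs] t h ut mh h_ge0 h_fin.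
  have -> : (fun w => \prod_(i <- [::]) f i (X i w) * \prod_(i <- t) h i (X i w))%R =
            (fun w => \prod_(i <- t) h i (X i w))%R.
    by apply/funext => w; rewrite big_nil mul1r.
  by rewrite big_nil mul1r; exact: expectation_prod_indep_ge0.
move: ut; rewrite cat_cons /= => /andP[a_st ust].
have a_t : a \notin t by move: a_st; rewrite mem_cat negb_or => /andP[].
have u' : uniq (s ++ a :: t) by rewrite -cat1s uniq_catCA cat1s /= a_st.
pose G (g : R -> R) w := (\prod_(i <- s) f i (X i w) * (g (X a w) * \prod_(i <- t) h i (X i w)))%R.
have step (g : R -> R) : measurable_fun setT g -> (forall y, 0 <= g y)%R -> g \o X a \in Lfun P 1 ->
    G g \in Lfun P 1 /\ 'E_P[G g] = (\prod_(i <- s) fine 'E_P[f i \o X i] *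
      (fine 'E_P[g \o X a] * \prod_(i <- t) fine 'E_P[h i \o X i]))%R%:E.
  move=> mg g_ge0 g_L1; pose k i := if i == a then g else h i.
  have k_t : {in t, k =1 h} by move=> i it; rewrite /k ifN //; apply: contraNneq a_t => <-.
  have mk i : measurable_fun setT (k i) by rewrite /k; case: ifP.
  have k_ge0 i y : (0 <= k i y)%R by rewrite /k; case: ifP.
  have k_fin i : 'E_P[k i \o X i] \is a fin_num.
    by rewrite /k; case: ifP => [/eqP->|_]; [exact: expectation_fin_num|exact: h_fin].
  have -> : G g = (fun w => \prod_(i <- s) f i (X i w) * \prod_(i <- a :: t) k i (X i w))%R.
    apply/funext => w; rewrite /G big_cons.
    have -> : (\prod_(i <- t) k i (X i w) = \prod_(i <- t) h i (X i w))%R.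
      by apply: eq_big_seq => i /k_t ->.
    by rewrite /k eqxx.
  have [-> ->] := IHs (a :: t) k u' mk k_ge0 k_fin; split => //.
  rewrite big_cons.
  have -> : (\prod_(i <- t) fine 'E_P[k i \o X i] = \prod_(i <- t) fine 'E_P[h i \o X i])%R.
    by apply: eq_big_seq => i /k_t ->.
  by rewrite /k eqxx.
have fpos_L1 : ((f a)^\+)%R \o X a \in Lfun P 1.
  by apply/Lfun1_integrable; move/Lfun1_integrable/(integrable_funrpos measurableT): (f_L1 a).
have fneg_L1 : ((f a)^\-)%R \o X a \in Lfun P 1.
  by apply/Lfun1_integrable; move/Lfun1_integrable/(integrable_funrneg measurableT): (f_L1 a).
have [Lp Ep] := step _ (measurable_funrpos (mf a)) (funrpos_ge0 _) fpos_L1.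
have [Ln En] := step _ (measurable_funrneg (mf a)) (funrneg_ge0 _) fneg_L1.
have fa_split : f a = ((f a)^\+ - (f a)^\-)%R by rewrite funrposBneg.
have -> : (fun w => \prod_(i <- a :: s) f i (X i w) * \prod_(i <- t) h i (X i w))%R =
    (G (f a)^\+ \- G (f a)^\-)%R.
  apply/funext => w; rewrite /G big_cons /=.
  have -> : f a (X a w) = ((f a)^\+ (X a w) - (f a)^\- (X a w))%R by rewrite {1}fa_split.
  ring.
split; first exact: rpredB.
rewrite expectationB // Ep En big_cons [in f a \o X a]fa_split.
rewrite (_ : ((f a)^\+ - (f a)^\-)%R \o X a = ((f a)^\+ \o X a) \- ((f a)^\- \o X a))%R //.
rewrite expectationB // fineB ?expectation_fin_num // -EFinB; congr (_%:E); ring.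
Qed.
Lemma expectation_prod_indep (s : seq nat) (f : nat -> R -> R) : uniq s ->
  (forall i, measurable_fun setT (f i)) -> (forall i, f i \o X i \in Lfun P 1) ->
  (fun w => \prod_(i <- s) f i (X i w))%R \in Lfun P 1 /\
  'E_P[fun w => \prod_(i <- s) f i (X i w)]%R = (\prod_(i <- s) fine 'E_P[f i \o X i])%R%:E.
Proof.
move=> us mf f_L1.
have := @expectation_prod_indep_mixed s [::] f (fun _ _ => 1%R).
rewrite cats0 => /(_ us mf f_L1 (fun=> measurable_cst _) (fun _ _ => ler01)).
rewrite !big_nil mulr1.
have -> : (fun w => \prod_(i <- s) f i (X i w) * 1)%R = (fun w => \prod_(i <- s) f i (X i w))%R.
  by apply/funext => w; rewrite mulr1.
apply => i.
by rewrite (_ : _ \o _ = cst 1%R) // expectation_cst.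
Qed.

End ProductRule.

Section MomentsOfSums.
Local Open Scope ereal_scope.
Context d (T : measurableType d) (R : realType) (P : probability T R)
  (X : nat -> {RV P >-> R}).
Hypothesis indep : mutually_independent X.

Variables (mu : nat -> R) (c : R).
Hypothesis moment_L1 : forall i k, (fun w => X i w ^+ k)%R \in Lfun P 1.
Hypothesis momentE : forall i k, 'E_P[fun w => X i w ^+ k]%R = (mu k)%:E.

Lemma expectation_monomial (s : seq nat) (b : nat -> nat) : uniq s ->
  (fun w => \prod_(i <- s) X i w ^+ b i)%R \in Lfun P 1 /\
  'E_P[fun w => \prod_(i <- s) X i w ^+ b i]%R = (\prod_(i <- s) mu (b i))%R%:E.
Proof.
move=> us; have [L1 E] := expectation_prod_indep indep (f := fun i y => y ^+ b i)%R us
  (fun i => exprn_measurable _) (fun i => moment_L1 i (b i)).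
by split => //; rewrite E; congr (_%:E); apply: eq_bigr => i _; rewrite momentE.
Qed.

Lemma expectation_shifted_sum_monomial j m n (b : nat -> nat) : (j <= m)%N ->
  (fun w => (\sum_(i < j) X i w + c) ^+ n * \prod_(j <= i < m) X i w ^+ b i)%R \in Lfun P 1 /\
  'E_P[fun w => (\sum_(i < j) X i w + c) ^+ n * \prod_(j <= i < m) X i w ^+ b i]%R =
  (shifted_sum_moment mu c j n * \prod_(j <= i < m) mu (b i))%R%:E.
Proof.
elim: j n b => [|j IHj] n b jm.
  have [L1 E] := expectation_monomial b (iota_uniq 0 (m - 0)).
  under eq_fun do rewrite big_ord0 add0r mulrC.
  split; first exact: (Lfun_scale _ (lexx 1%R) L1).
  by rewrite (expectationZl _ L1) E -EFinM mulrC.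
pose b' k i := if i == j then k else b i.
have prod_b' k (F : nat -> nat -> R) :
    (\prod_(j <= i < m) F i (b' k i) = F j k * \prod_(j.+1 <= i < m) F i (b i))%R.
  rewrite big_ltn // /b' eqxx; congr (_ * _)%R.
  by apply: eq_big_nat => i /andP[ji _]; rewrite gtn_eqF.
pose G k w := ((\sum_(i < j) X i w + c) ^+ (n - k) * \prod_(j <= i < m) X i w ^+ b' k i)%R.
have IH k : G k \in Lfun P 1 /\
    'E_P[G k] = (shifted_sum_moment mu c j (n - k) * \prod_(j <= i < m) mu (b' k i))%R%:E.
  exact: IHj (ltnW jm).
have -> : (fun w => (\sum_(i < j.+1) X i w + c) ^+ n * \prod_(j.+1 <= i < m) X i w ^+ b i)%R =
          (\sum_(k < n.+1) ('C(n, k)%:R \o* G k))%R.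
  apply/funext => w; rewrite fct_sumE big_ord_recr /= addrAC exprDn big_distrl /=.
  apply: eq_bigr => k _; rewrite /G (prod_b' k (fun i e => X i w ^+ e)%R) -mulr_natr.
  ring.
split; first by apply: rpred_sum => k _; exact: (Lfun_scale _ (lexx 1%R) (IH k).1).
rewrite expectation_sumr => [|k]; last exact: (Lfun_scale _ (lexx 1%R) (IH k).1).
have EZ (k : 'I_n.+1) : 'E_P[('C(n, k)%:R \o* G k)%R] =
    ('C(n, k)%:R * (shifted_sum_moment mu c j (n - k) * \prod_(j <= i < m) mu (b' k i)))%R%:E.
  by rewrite EFinM -(IH k).2; exact: expectationZl (IH k).1.
rewrite (eq_bigr _ (fun k _ => EZ k)).
rewrite sumEFin /= mulr_suml; congr (_%:E); apply: eq_bigr => k _.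
rewrite (prod_b' k (fun _ e => mu e)); ring.
Qed.

Lemma expectation_shifted_sum j n :
  'E_P[fun w => (\sum_(i < j) X i w + c) ^+ n]%R = (shifted_sum_moment mu c j n)%:E.
Proof.
have [_] := expectation_shifted_sum_monomial n (fun=> 0%N) (leqnn j).
rewrite big_geq // mulr1 => <-; congr 'E_P[_]; apply/funext => w.
by rewrite big_geq // mulr1.
Qed.

End MomentsOfSums.

Lemma exprn_div_fact_le_expR (R : realType) (x : R) k : 0 <= x -> x ^+ k / (k`!)%:R <= expR x.
Proof.
move=> x_ge0; case: k => [|k]; last by rewrite (le_trans _ (expR_ge1Dxn k x_ge0)) // lerDr.
by rewrite expr0 fact0 divr1 (le_trans _ (expR_ge1Dx x)) // lerDl.
Qed.

Lemma normr_exprn_le_expR (R : realType) k (t y : R) : 0 < t ->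
  `|y ^+ k| <= (k`!)%:R / t ^+ k * (expR (t * y) + expR (- t * y)).
Proof.
move=> t_gt0; have tk_gt0 : 0 < t ^+ k by rewrite exprn_gt0.
have kfact_gt0 : 0 < (k`!)%:R :> R by rewrite ltr0n fact_gt0.
have expR_abs : expR (t * `|y|) <= expR (t * y) + expR (- t * y).
  by case: (real_ge0P (num_real y)) => y0; rewrite ?mulrN -?mulNr (lerDl, lerDr) expR_ge0.
apply: (le_trans _ (ler_wpM2l _ expR_abs)); last by rewrite divr_ge0 // ltW.
have -> : `|y ^+ k| = (t * `|y|) ^+ k / (k`!)%:R * ((k`!)%:R / t ^+ k).
  by rewrite normrX exprMn; field; rewrite !gt_eqF.
rewrite [leRHS]mulrC; apply: ler_wpM2r; first by rewrite divr_ge0 // ltW.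
by rewrite exprn_div_fact_le_expR // mulr_ge0 // ltW.
Qed.

Section MomentsFromMGF.
Local Open Scope ereal_scope.
Context d (T : measurableType d) (R : realType) (P : probability T R) (Y : {RV P >-> R}).

Lemma exprn_Lfun_of_mgf (r0 : R) : (0 < r0)%R ->
  (forall t, `|t| < r0 -> 'M_P Y t \is a fin_num)%R ->
  forall k, (fun w => Y w ^+ k)%R \in Lfun P 1.
Proof.
move=> r0_gt0 mgf_fin k; pose t := (r0 / 2)%R.
have t_gt0 : (0 < t)%R by rewrite divr_gt0.
have expR_L1 u : (`|u| < r0)%R -> (fun w => expR (u * Y w))%R \in Lfun P 1.
  move=> /mgf_fin; rewrite /mmt_gen_fun => fin.
  apply: Lfun1_ge0 => [|w|]; last by rewrite (_ : (fun w => _) = expR \o u \o* Y)%R //; apply/funext => w /=; rewrite mulrC.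
    by apply: measurableT_comp => //; apply: measurable_funM.
  exact: expR_ge0.
have t_lt : (`|t| < r0)%R by rewrite gtr0_norm // ltr_pdivrMr // ltr_pMr // ltr1n.
have nt_lt : (`|- t| < r0)%R by rewrite normrN.
have bound_L1 : ((k`!)%:R / t ^+ k \o* (fun w => expR (t * Y w) + expR (- t * Y w)))%R
    \in Lfun P 1.
  by apply: Lfun_scale => //; exact: (rpredD (expR_L1 _ t_lt) (expR_L1 _ nt_lt)).
apply/Lfun1_integrable; move/Lfun1_integrable: bound_L1; apply: le_integrable => //.
  exact/measurable_EFinP/measurable_funX.
move=> w _; rewrite lee_fin /= mulrC.
exact: le_trans (normr_exprn_le_expR k (Y w) t_gt0) (ler_norm _).
Qed.

End MomentsFromMGF.

Section SameLaw.
Local Open Scope ereal_scope.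
Context d0 d (T0 : measurableType d0) (T : measurableType d) (R : realType)
  (P0 : probability T0 R) (P : probability T R) (Y : {RV P0 >-> R}) (Z : {RV P >-> R}).
Hypothesis same_law : forall B, measurable B -> P (Z @^-1` B) = P0 (Y @^-1` B).

Lemma Lfun_expectation_same_law (f : R -> R) : measurable_fun setT f ->
  f \o Y \in Lfun P0 1 -> f \o Z \in Lfun P 1 /\ 'E_P[f \o Z] = 'E_P0[f \o Y].
Proof.
move=> mf /Lfun1_integrable fY_int.
have mZ := measurable_funPT Z; have mY := measurable_funPT Y.
have same_pushforward A : measurable A -> A `<=` setT ->
    pushforward P Z A = pushforward P0 Y A.
  by move=> mA _; rewrite /pushforward same_law.
have mfE : measurable_fun setT (EFin \o f) by exact/measurable_EFinP.
have mabs : measurable_fun setT (abse \o (EFin \o f)) by exact: measurableT_comp.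
have fZ_int : P.-integrable setT (EFin \o (f \o Z)).
  apply/integrableP; split; first exact/measurable_EFinP/measurableT_comp.
  have := ge0_integral_pushforward mZ P measurableT mabs (fun y _ => abse_ge0 _).
  rewrite preimage_setT => <-; rewrite (eq_measure_integral (pushforward P0 Y)) //.
  rewrite (ge0_integral_pushforward mY P0 measurableT mabs (fun y _ => abse_ge0 _)).
  by rewrite preimage_setT; case/integrableP: fY_int.
split; first exact/Lfun1_integrable.
have fZ_int' : P.-integrable (Z @^-1` setT) ((EFin \o f) \o Z) by rewrite preimage_setT.
have fY_int' : P0.-integrable (Y @^-1` setT) ((EFin \o f) \o Y) by rewrite preimage_setT.
rewrite !expectation.unlock.
have := integral_pushforward mZ mfE fZ_int' measurableT.
rewrite preimage_setT => <-; rewrite (eq_measure_integral (pushforward P0 Y)) //.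
by rewrite (integral_pushforward mY mfE fY_int' measurableT) preimage_setT.
Qed.

End SameLaw.

Theorem theorem2p3 (R : realType)
  (d0 : measure_display) (T0 : measurableType d0) (P0 : probability T0 R)
  (Y : {RV P0 >-> R})
  (d : measure_display) (T : measurableType d) (P : probability T R)
  (Ys : nat -> {RV P >-> R}) (r : nat) (r0 x y : R) :
  0 < r0 ->
  (forall t : R, `|t| < r0 -> ('M_P0 Y t)%E \is a fin_num) ->
  (forall (j : nat) (B : set R), measurable B ->
     P (Ys j @^-1` B) = P0 (Y @^-1` B)) ->
  mutually_independent Ys ->
  (0 < r)%N ->
  forall n : nat,
    prob_rBell P0 Y r x y n =
    \sum_(k < n.+1) prob_rStirling2 Ys r n k * falling x k * y ^+ k.
Proof.
move=> r0_gt0 mgf_fin same_law indep _ n. (* the identity also holds for [r = 0] *)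
pose mu k := fine ('E_P0[fun w => (Y w ^+ k)%R])%E.
have Y_L1 := exprn_Lfun_of_mgf r0_gt0 mgf_fin.
have moment i k := Lfun_expectation_same_law (same_law i) (exprn_measurable k) (Y_L1 k).
have momentE i k : ('E_P[fun w => (Ys i w ^+ k)%R])%E = (mu k)%:E.
  by rewrite (moment i k).2 fineK // expectation_fin_num.
have mu0 : mu 0%N = 1.
  by rewrite /mu (_ : (fun w => _) = cst 1) ?expectation_cst //; apply/funext => w.
rewrite /prob_rBell /mgf_series (coef_binom_series_mul_exp_series _ _ _ _ mu0).
apply: eq_bigr => k _; rewrite /prob_rStirling2; congr (_ * _ * _ * _).
apply: eq_bigr => j _.
by rewrite (expectation_shifted_sum indep r%:R (fun i k => (moment i k).1) momentE).
Qed.
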